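(* Let $I\subset S=K[x_1,\dots,x_t]$ be a proper monomial ideal and $n\ge 1$. Let $\mathbf X^{\mathbf a}$ be a monomial corresponding to $v(I^n)$, i.e. $\deg\mathbf X^{\mathbf a}=v(I^n)$ and $(I^n:\mathbf X^{\mathbf a})\in\operatorname{Ass}(S/I^n)$. If $\mathbf X^{\mathbf G}$ is a proper divisor of $\mathbf X^{\mathbf a}$, then $v(I^n)=v(I^n:\mathbf X^{\mathbf G})+\deg\mathbf X^{\mathbf G}$.
   Context: $K$ is a field and $S$ is standard graded. For a proper graded ideal $J$, the $v$-number is $v(J)=\min\{k\ge 0 : \exists f\in S_k,\ \mathcal P\in\operatorname{Ass}(S/J) \text{ with } (J:f)=\mathcal P\}$. $\mathbf X^{\mathbf a}$ denotes the monomial $x_1^{a_1}\cdots x_t^{a_t}$. *)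

From HB Require Import structures.
From mathcomp Require Import all_boot all_order all_algebra.
From mathcomp Require Import mpoly.
From Stdlib Require Import ClassicalEpsilon.

Set Implicit Arguments.
Unset Strict Implicit.
Unset Printing Implicit Defensive.

Import GRing.Theory.
Local Open Scope ring_scope.

Section Ideals.
Variables (K : fieldType) (t : nat).
Local Notation S := {mpoly K[t]}.

Definition pideal := S -> Prop.

Definition ideal_eq (I J : pideal) := forall f, I f <-> J f.

Definition is_pideal (I : pideal) :=
  [/\ I 0, (forall f g, I f -> I g -> I (f + g)) & (forall r f, I f -> I (r * f))].

Definition ideal_gen (G : pideal) : pideal := fun f =>
  exists s : seq (S * S), (forall q, q \in s -> G q.2) /\
                          f = \sum_(q <- s) q.1 * q.2.

Definition monomial_ideal (I : pideal) :=
  exists M : 'X_{1..t} -> Prop,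
    ideal_eq I (ideal_gen (fun f => exists m, M m /\ f = 'X_[m])).

Definition proper_pideal (I : pideal) := ~ I 1.

Definition ideal_mul (I J : pideal) : pideal :=
  ideal_gen (fun f => exists a b, [/\ I a, J b & f = a * b]).

Fixpoint ideal_pow (I : pideal) (n : nat) : pideal :=
  match n with
  | 0 => fun _ => True
  | n'.+1 => ideal_mul (ideal_pow I n') I
  end.

Definition colon (J : pideal) (f : S) : pideal := fun g => J (g * f).

Definition prime_pideal (P : pideal) :=
  [/\ is_pideal P, ~ P 1 & forall a b, P (a * b) -> P a \/ P b].

(* Associated primes of S/J: primes of the form (J : f). *)
Definition Ass (J : pideal) (P : pideal) :=
  prime_pideal P /\ exists f : S, ideal_eq (colon J f) P.

Definition vnum_pred (J : pideal) (k : nat) :=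
  exists f : S, f \is k.-homog /\
    exists P, Ass J P /\ ideal_eq (colon J f) P.

Definition vnum_predb (J : pideal) : pred nat :=
  fun k => if excluded_middle_informative (vnum_pred J k) then true else false.

Lemma vnum_predbP (J : pideal) k : vnum_pred J k <-> vnum_predb J k.
Proof.
rewrite /vnum_predb; case: excluded_middle_informative => H; split => //.
Qed.

(* The v-number: the least such k (defaults to 0 if no such k exists,
   which does not happen for proper graded ideals). *)
Definition vnumber (J : pideal) : nat :=
  match excluded_middle_informative (exists k, vnum_predb J k) with
  | left H => ex_minn H
  | right _ => 0%N
  end.

End Ideals.

From HB Require Import structures.
From mathcomp Require Import all_boot all_order all_algebra.
From mathcomp Require Import mpoly.
From Stdlib Require Import ClassicalEpsilon.

Set Implicit Arguments.
Unset Strict Implicit.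
Unset Printing Implicit Defensive.

Import GRing.Theory.
Local Open Scope ring_scope.

(* Write X^a = X^(a-G) X^G.  Since ((J : X^G) : f) = (J : f X^G), the monomial
   X^(a-G) witnesses v(J : X^G) <= deg a - deg G, and conversely any witness f
   for v(J : X^G) yields the witness f X^G for v(J), so
   v(J) <= v(J : X^G) + deg G.  Neither inequality uses that J is a power of a
   proper monomial ideal, nor that X^G is a proper divisor of X^a. *)

Section VNumberColon.
Variables (K : fieldType) (t : nat).
Implicit Types (J : pideal K t) (f g : {mpoly K[t]}).

Lemma vnumber_min J k : vnum_pred J k -> (vnumber J <= k)%N.
Proof.
move=> Jk; rewrite /vnumber; case: excluded_middle_informative => // ex.
by case: ex_minnP => m _; apply; apply/vnum_predbP.
Qed.

Lemma vnum_pred_vnumber J k : vnum_pred J k -> vnum_pred J (vnumber J).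
Proof.
move=> Jk; rewrite /vnumber; case: excluded_middle_informative => [ex|nex].
  by case: ex_minnP => m /vnum_predbP.
by case: nex; exists k; apply/vnum_predbP.
Qed.

Lemma colon_colon J f g : ideal_eq (colon (colon J g) f) (colon J (f * g)).
Proof. by move=> h; rewrite /colon mulrA. Qed.

Lemma vnum_pred_colon J f g k :
  f \is k.-homog -> Ass J (colon J (f * g)) -> vnum_pred (colon J g) k.
Proof.
move=> fk [primeP _]; exists f; split => //.
exists (colon J (f * g)); split; last exact: colon_colon.
by split => //; exists f; apply: colon_colon.
Qed.

Lemma vnum_pred_of_colon J g d k :
  g \is d.-homog -> vnum_pred (colon J g) k -> vnum_pred J (k + d).
Proof.
move=> gd [f [fk [P [[primeP _] fP]]]].
have fgP : ideal_eq (colon J (f * g)) P.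
  by move=> h; rewrite -colon_colon; apply: fP.
exists (f * g); split; first exact: dhomogM.
by exists P; split => //; split => //; exists (f * g).
Qed.

Lemma vnumber_colon J f g k d :
  f \is k.-homog -> g \is d.-homog -> Ass J (colon J (f * g)) ->
  vnumber J = (k + d)%N -> vnumber J = (vnumber (colon J g) + d)%N.
Proof.
move=> fk gd AssJ vJ.
have colon_k := vnum_pred_colon fk AssJ.
have le_colon := vnumber_min colon_k.
have le_J := vnumber_min (vnum_pred_of_colon gd (vnum_pred_vnumber colon_k)).
by apply/eqP; rewrite eqn_leq le_J vJ leq_add2r le_colon.
Qed.

End VNumberColon.

Theorem proposition4p6 (K : fieldType) (t : nat) (I : pideal K t) (n : nat)
    (a G : 'X_{1..t}) :
  monomial_ideal I -> proper_pideal I -> (1 <= n)%N ->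
  mdeg a = vnumber (ideal_pow I n) ->
  Ass (ideal_pow I n) (colon (ideal_pow I n) 'X_[a]) ->
  (G <= a)%MM -> G != a ->
  vnumber (ideal_pow I n) =
    (vnumber (colon (ideal_pow I n) 'X_[G]) + mdeg G)%N.
Proof.
move=> _ _ _ deg_a AssJ le_Ga _.
have splitX : 'X_[a] = 'X_[a - G] * 'X_[G] :> {mpoly K[t]}.
  by rewrite -mpolyXD submK.
rewrite splitX in AssJ.
have homX (m : 'X_{1..t}) : ('X_[m] : {mpoly K[t]}) \is (mdeg m).-homog.
  by rewrite dhomogX.
apply: (vnumber_colon (homX _) (homX _) AssJ).
by rewrite -deg_a -mdegD submK.
Qed.
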